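(* Let $Q(X,Y)=\sum_{i=0}^{t} Q_i(X)Y^i \in M_{s,\ell}$ have $Y$-degree exactly $t$, where $t < s$. Then $G(X)^{s-t}$ divides $Q_t(X)$.
   Context: Let $\mathbb F_q$ be a finite field and $n<q$. Let $\alpha_0,\dots,\alpha_{n-1}$ be distinct nonzero elements of $\mathbb F_q$ and $w_0,\dots,w_{n-1}$ nonzero elements of $\mathbb F_q$. Let $r=(r_0,\dots,r_{n-1})\in\mathbb F_q^n$ and $r_i'=r_i/w_i$. Let $G(X)=\prod_{i=0}^{n-1}(X-\alpha_i)$. Let $s\le \ell$ be positive integers. A polynomial $Q\in\mathbb F_q[X,Y]$ passes through a point $(a,b)\in\mathbb F_q^2$ with multiplicity $s$ if $Q(X+a,Y+b)$ has no monomials of total degree less than $s$. $M_{s,\ell}$ denotes the set of all $Q\in\mathbb F_q[X,Y]$ of $Y$-degree at most $\ell$ that pass through each of the $n$ points $(\alpha_i,r_i')$ with multiplicity $s$. *)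

From HB Require Import structures.
From mathcomp Require Import all_boot all_order all_algebra all_field.
Set Implicit Arguments. Unset Strict Implicit. Unset Printing Implicit Defensive.
Import GRing.Theory.
Local Open Scope ring_scope.

(* Bivariate polynomials F[X,Y] are represented as {poly {poly F}}:
   the outer variable is Y, coefficients are polynomials in X.
   So Q = \sum_i Q`_i Y^i with Q`_i : {poly F} = Q_i(X). *)

Definition shift2 (F : fieldType) (a b : F) (Q : {poly {poly F}}) : {poly {poly F}} :=
  (map_poly (fun p : {poly F} => p \Po ('X + a%:P)) Q) \Po ('X + (b%:P)%:P).

Definition coef2 (F : fieldType) (P : {poly {poly F}}) (i j : nat) : F := (P`_j)`_i.

Definition passes_with_mult (F : fieldType) (Q : {poly {poly F}}) (a b : F) (s : nat) : Prop :=
  forall i j : nat, (i + j < s)%N -> coef2 (shift2 a b Q) i j = 0.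

Definition in_M (F : fieldType) (n s l : nat) (alpha r' : 'I_n -> F)
    (Q : {poly {poly F}}) : Prop :=
  (size Q <= l.+1)%N /\ forall i : 'I_n, passes_with_mult Q (alpha i) (r' i) s.

From HB Require Import structures.
From mathcomp Require Import all_boot all_order all_algebra all_field.
From mathcomp Require Import zify.
Import GRing.Theory.
Local Open Scope ring_scope.

(* The shift (X, Y) |-> (X + a, Y + b) preserves the Y-degree and acts on the
   leading Y-coefficient Q_t only through X |-> X + a.  So if Q passes through
   (a, b) with multiplicity s, the coefficients of X^j Y^t in Q(X + a, Y + b)
   vanish for j < s - t, i.e. (X - a)^(s - t) divides Q_t.  As the alpha_i are
   distinct, the coprime factors (X - alpha_i)^(s - t) multiply up to G^(s - t). *)

Lemma XsubC_exp_dvdp (F : fieldType) (p : {poly F}) (a : F) (k : nat) :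
  (forall i, (i < k)%N -> (p \Po ('X + a%:P))`_i = 0) ->
  ('X - a%:P) ^+ k %| p.
Proof.
set q := p \Po ('X + a%:P) => q_low0.
have take_q0 : take_poly k q = 0.
  by apply/polyP => i; rewrite coef_take_poly coef0; case: ifP => // /q_low0.
have q_eq : q = drop_poly k q * 'X^k.
  by rewrite -{1}(poly_take_drop k q) take_q0 add0r.
have -> : p = q \Po ('X - a%:P).
  by rewrite /q -comp_polyA comp_polyD comp_polyX comp_polyC subrK comp_polyXr.
by rewrite q_eq comp_polyM comp_Xn_poly dvdp_mull.
Qed.

Lemma prod_XsubC_exp_dvdp (F : fieldType) (s : seq F) (k : nat) (p : {poly F}) :
  uniq s -> (forall a, a \in s -> ('X - a%:P) ^+ k %| p) ->
  \prod_(a <- s) ('X - a%:P) ^+ k %| p.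
Proof.
elim: s => [|a s IH] /=; first by rewrite big_nil dvd1p.
move=> /andP[a_notin_s uniq_s] dvd_p; rewrite big_cons Gauss_dvdp.
  rewrite dvd_p ?mem_head //= IH // => b bs.
  by apply: dvd_p; rewrite in_cons bs orbT.
rewrite prodrXl; apply/coprimep_expl/coprimep_expr.
by rewrite coprimep_sym coprimep_XsubC root_prod_XsubC.
Qed.

Section Shift2.

Variables (F : fieldType) (a b : F) (Q : {poly {poly F}}).

Let shiftX (p : {poly F}) := p \Po ('X + a%:P).

Lemma size_map_shiftX : size (map_poly shiftX Q) = size Q.
Proof.
have [->|Q_nz] := eqVneq Q 0; first by rewrite map_poly0.
apply: size_map_poly_id0.
by rewrite /shiftX comp_poly2_eq0 ?size_XaddC // lead_coef_eq0.
Qed.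

Lemma lead_coef_shift2 : lead_coef (shift2 a b Q) = shiftX (lead_coef Q).
Proof.
have [->|Q_nz] := eqVneq Q 0.
  by rewrite /shift2 map_poly0 comp_poly0 lead_coef0 /shiftX comp_poly0.
rewrite /shift2 -/shiftX lead_coef_comp ?size_XaddC //.
rewrite lead_coefXaddC expr1n mulr1 !lead_coefE size_map_shiftX.
by rewrite coef_map_id0 // /shiftX comp_poly0.
Qed.

Lemma size_shift2 : size (shift2 a b Q) = size Q.
Proof. by rewrite /shift2 size_comp_poly2 ?size_XaddC // size_map_shiftX. Qed.

End Shift2.

Theorem lemma1 (F : finFieldType) (n : nat) (hnq : (n < #|F|)%N)
  (alpha w r : 'I_n -> F)
  (alpha_inj : injective alpha) (alpha_nz : forall i, alpha i != 0)
  (w_nz : forall i, w i != 0)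
  (s l : nat) (s_pos : (0 < s)%N) (s_le_l : (s <= l)%N)
  (Q : {poly {poly F}}) (t : nat)
  (hQ : in_M s l alpha (fun i => r i / w i) Q)
  (hdeg : size Q = t.+1) (hts : (t < s)%N) :
  (\prod_(i < n) ('X - (alpha i)%:P)) ^+ (s - t) %| Q`_t.
Proof.
have [_ Q_mult] := hQ.
rewrite -prodrXl -(big_map alpha xpredT (fun a => ('X - a%:P) ^+ (s - t))).
apply: prod_XsubC_exp_dvdp; first by rewrite map_inj_uniq ?index_enum_uniq.
move=> _ /mapP[i _ ->]; apply: XsubC_exp_dvdp => j j_lt.
have top_coef : (shift2 (alpha i) (r i / w i) Q)`_t = Q`_t \Po ('X + (alpha i)%:P).
  have := @lead_coef_shift2 F (alpha i) (r i / w i) Q.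
  by rewrite !lead_coefE size_shift2 hdeg.
rewrite -top_coef; apply: (Q_mult i j t).
by move: j_lt hts; clear; lia.
Qed.
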